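(* Let $\mathbf{C}\in\mathbb{R}^{dm\times dm}$ be the matrix defined in the context. Consider Problem (A): minimize $\langle \mathbf{C},\mathbf{R}^\top\mathbf{R}\rangle$ over $\mathbf{R}=[\mathbf{R}_1\cdots\mathbf{R}_m]\in\mathbb{R}^{d\times dm}$ subject to $\mathbf{R}_1,\ldots,\mathbf{R}_m\in\mathbb{SO}(d)$; Problem (B): minimize $\langle\mathbf{C},\mathbf{G}\rangle$ over symmetric $\mathbf{G}\in\mathbb{R}^{dm\times dm}$ subject to $\mathbf{G}$ positive semidefinite, $\mathrm{rank}(\mathbf{G})\le d$, $\mathbf{G}_{ii}=\mathbf{I}$ for $i\in\{1,\ldots,m\}$, and $\mathbf{G}_{i,i+1}\in\mathbb{SO}(d)$ for $i\in\{1,\ldots,m-1\}$. Then Problems (A) and (B) are equivalent: $\mathbf{G}^\star$ is a minimizer of (B) if and only if $\mathbf{G}^\star=(\mathbf{R}^\star)^\top\mathbf{R}^\star$ for some minimizer $\mathbf{R}^\star$ of (A).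
   Context: $\mathbb{SO}(d)=\{\mathbf{R}\in\mathbb{R}^{d\times d}:\mathbf{R}^\top\mathbf{R}=\mathbf{I},\ \det\mathbf{R}=1\}$; $\langle\mathbf{A},\mathbf{B}\rangle=\mathrm{trace}(\mathbf{A}^\top\mathbf{B})$. For $\mathbf{X}\in\mathbb{R}^{dm\times dm}$, $\mathbf{X}_{ij}$ denotes its $(i,j)$-th $d\times d$ block. Data: point sets $\mathcal{P}_1,\ldots,\mathcal{P}_m\subset\mathbb{R}^d$; write $i\sim j$ if $\mathcal{P}_i$ and $\mathcal{P}_j$ share common points, with $n_{ij}$ common points whose local coordinates are $\boldsymbol{x}^k_{ij}$ (in $\mathcal{P}_i$) and $\boldsymbol{x}^k_{ji}$ (in $\mathcal{P}_j$), $1\le k\le n_{ij}$. Let $\boldsymbol{e}_i\in\mathbb{R}^m$ be the $i$-th standard basis vector, $\boldsymbol{e}_{ij}=\boldsymbol{e}_i-\boldsymbol{e}_j$, $\boldsymbol{d}^k_{ij}=(\boldsymbol{e}_i\otimes\mathbf{I})\boldsymbol{x}^k_{ij}-(\boldsymbol{e}_j\otimes\mathbf{I})\boldsymbol{x}^k_{ji}\in\mathbb{R}^{dm}$. Define $\mathbf{L}=\sum_{i\sim j}n_{ij}\boldsymbol{e}_{ij}\boldsymbol{e}_{ij}^\top$, $\mathbf{B}=\sum_{i\sim j}\sum_{k=1}^{n_{ij}}\boldsymbol{d}^k_{ij}\boldsymbol{e}_{ij}^\top$, $\mathbf{D}=\sum_{i\sim j}\sum_{k=1}^{n_{ij}}\boldsymbol{d}^k_{ij}(\boldsymbol{d}^k_{ij})^\top$,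 and $\mathbf{C}=\mathbf{D}-\mathbf{B}\mathbf{L}^\dagger\mathbf{B}^\top$, where $\mathbf{L}^\dagger$ is the Moore–Penrose pseudo-inverse. *)

From mathcomp Require Import all_boot all_order all_algebra.
From mathcomp Require Import reals.
Set Implicit Arguments. Unset Strict Implicit. Unset Printing Implicit Defensive.
Import Order.TTheory GRing.Theory Num.Theory.
Local Open Scope ring_scope.

Section Defs.
Variable R : realType.

Definition SO (d : nat) (Q : 'M[R]_d) : Prop := Q^T *m Q = 1%:M /\ \det Q = 1.

Definition frob (p q : nat) (A B : 'M[R]_(p, q)) : R := \tr (A^T *m B).

(* e_i^T (x) I : the d x dm selector of the i-th block;
   the (i,a) coordinate of R^{dm} is index mxvec_index i a = i*d + a *)
Definition blk_sel {m : nat} (d : nat) (i : 'I_m) : 'M[R]_(d, m * d) :=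
  \sum_(a < d) delta_mx a (mxvec_index i a).

Definition blk {m d : nat} (X : 'M[R]_(m * d)) (i j : 'I_m) : 'M[R]_d :=
  blk_sel d i *m X *m (blk_sel d j)^T.

Definition emb {m d : nat} (i : 'I_m) (x : 'cV[R]_d) : 'cV[R]_(m * d) :=
  (blk_sel d i)^T *m x.

Definition evec {m : nat} (i : 'I_m) : 'cV[R]_m := delta_mx i 0.
Definition eij {m : nat} (i j : 'I_m) : 'cV[R]_m := evec i - evec j.

(* Data: n i j = n_ij common points (i ~ j iff n i j > 0), considered for i < j
   (each unordered pair once); x i j k = x^k_ij (k < n i j), x j i k = x^k_ji. *)
Definition dvec (m d : nat) (x : 'I_m -> 'I_m -> nat -> 'cV[R]_d)
  (i j : 'I_m) (k : nat) : 'cV[R]_(m * d) := emb i (x i j k) - emb j (x j i k).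

Definition Lmat (m : nat) (n : 'I_m -> 'I_m -> nat) : 'M[R]_m :=
  \sum_(i < m) \sum_(j < m | (i < j)%N && (0 < n i j)%N)
     (n i j)%:R *: (eij i j *m (eij i j)^T).

Definition Bmat (m d : nat) (n : 'I_m -> 'I_m -> nat)
  (x : 'I_m -> 'I_m -> nat -> 'cV[R]_d) : 'M[R]_(m * d, m) :=
  \sum_(i < m) \sum_(j < m | (i < j)%N && (0 < n i j)%N) \sum_(0 <= k < n i j)
     dvec x i j k *m (eij i j)^T.

Definition Dmat (m d : nat) (n : 'I_m -> 'I_m -> nat)
  (x : 'I_m -> 'I_m -> nat -> 'cV[R]_d) : 'M[R]_(m * d) :=
  \sum_(i < m) \sum_(j < m | (i < j)%N && (0 < n i j)%N) \sum_(0 <= k < n i j)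
     dvec x i j k *m (dvec x i j k)^T.

Definition is_MP_pinv (p : nat) (A X : 'M[R]_p) : Prop :=
  [/\ A *m X *m A = A, X *m A *m X = X, (A *m X)^T = A *m X & (X *m A)^T = X *m A].

Definition Cmat (m d : nat) (n : 'I_m -> 'I_m -> nat)
  (x : 'I_m -> 'I_m -> nat -> 'cV[R]_d) (Ldag : 'M[R]_m) : 'M[R]_(m * d) :=
  Dmat n x - Bmat n x *m Ldag *m (Bmat n x)^T.

Definition is_minimizer (T : Type) (F : T -> Prop) (f : T -> R) (t : T) : Prop :=
  F t /\ forall u, F u -> f t <= f u.

(* Problem (A): R = [R_1 ... R_m], R_i = R *m (blk_sel i)^T in SO(d) *)
Definition feasA (m d : nat) (Rm : 'M[R]_(d, m * d)) : Prop :=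
  forall i : 'I_m, SO (Rm *m (blk_sel d i)^T).
Definition objA (m d : nat) (C : 'M[R]_(m * d)) (Rm : 'M[R]_(d, m * d)) : R :=
  frob C (Rm^T *m Rm).

Definition psd (p : nat) (G : 'M[R]_p) : Prop :=
  forall v : 'cV[R]_p, 0 <= (v^T *m G *m v) 0 0.

Definition feasB (m d : nat) (G : 'M[R]_(m * d)) : Prop :=
  [/\ G^T = G, psd G, (\rank G <= d)%N,
      (forall i : 'I_m, blk G i i = 1%:M) &
      (forall i j : 'I_m, nat_of_ord j = i.+1 -> SO (blk G i j))].
Definition objB (m d : nat) (C : 'M[R]_(m * d)) (G : 'M[R]_(m * d)) : R :=
  frob C G.

End Defs.

From mathcomp Require Import all_boot all_order all_algebra.
From mathcomp Require Import reals.
Import Order.TTheory GRing.Theory Num.Theory.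
Local Open Scope ring_scope.

(* The Gram map R |-> R^T R sends the feasible set of (A) onto that of (B) and
   carries the objective of (A) to that of (B), so minimizers correspond.
   Surjectivity: if G is symmetric of rank <= d and its block G_11 = P G P^T is
   the identity (P the first block selector), then Y := P G has rank d, the row
   space of G is that of Y, and symmetry forces G = Y^T Y. The blocks of Y are
   orthogonal since G_ii = I, and det (Y_i^T Y_(i+1)) = 1 propagates
   det Y_1 = det I = 1 along the chain. *)

Lemma is_minimizer_image {R : realType} {T U : Type} (g : T -> U)
    {FA : T -> Prop} {FB : U -> Prop} {f : U -> R} {u : U} :
  (forall t, FA t -> FB (g t)) ->
  (forall u', FB u' -> exists2 t, FA t & u' = g t) ->
  is_minimizer FB f u <-> exists t, is_minimizer FA (f \o g) t /\ u = g t.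
Proof.
move=> FAB FBA; split.
- case=> /FBA[t FAt ->] gt_min; exists t; split=> //.
  by split=> // t' /FAB; apply: gt_min.
- case=> t [[FAt t_min] ->]; split; first exact: FAB.
  by move=> u' /FBA[t' /t_min ? ->].
Qed.

Lemma sym_rank_le_gram (F : fieldType) (n d : nat) (G : 'M[F]_n) (P : 'M[F]_(d, n)) :
  G^T = G -> (\rank G <= d)%N -> P *m G *m P^T = 1%:M ->
  G = (P *m G)^T *m (P *m G).
Proof.
set Y := P *m G => G_sym rkG YP.
have rkY : \rank Y = d.
  apply/eqP; rewrite eqn_leq rank_leq_row -{1}(mxrank1 F d) -YP.
  exact: mxrankM_maxl.
have sYG : (Y <= G)%MS by apply: submxMl.
have /submxP[M GE] : (G <= Y)%MS.
  by rewrite -(mxrank_leqif_sup sYG).2 eqn_leq (mxrankS sYG) rkY rkG.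
have PM : P *m M = 1%:M.
  have : P *m M *m Y *m P^T = Y *m P^T by rewrite -(mulmxA P M Y) -GE.
  by rewrite -mulmxA YP mulmx1.
suff MY : M = Y^T by rewrite {1}GE MY.
have : G^T *m P^T = G *m P^T by rewrite G_sym.
rewrite {1}GE trmx_mul -mulmxA -trmx_mul PM trmx1 mulmx1 => ->.
by rewrite GE -mulmxA -/Y YP mulmx1.
Qed.

Lemma det_chain_eq1 {F : comPzRingType} {m d : nat} (Q : 'I_m.+1 -> 'M[F]_d) :
  \det (Q ord0) = 1 ->
  (forall i j : 'I_m.+1, j = i.+1 :> nat -> \det ((Q i)^T *m Q j) = 1) ->
  forall i, \det (Q i) = 1.
Proof.
move=> det0 det_step [k]; elim: k => [|k IH] lt_k.
  by rewrite (_ : Ordinal lt_k = ord0) //; apply: val_inj.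
have := det_step (Ordinal (ltnW lt_k)) (Ordinal lt_k) erefl.
by rewrite det_mulmx det_tr IH mul1r.
Qed.

Lemma blk_gram (R : realType) (m d : nat) (Y : 'M[R]_(d, m * d)) (i j : 'I_m) :
  blk (Y^T *m Y) i j = (Y *m (blk_sel R d i)^T)^T *m (Y *m (blk_sel R d j)^T).
Proof. by rewrite /blk trmx_mul trmxK !mulmxA. Qed.

Section Feasibility.
Variables (R : realType) (m d : nat).

Lemma feasA_gram (Y : 'M[R]_(d, m * d)) : feasA Y -> feasB (Y^T *m Y).
Proof.
move=> YA; split.
- by rewrite trmx_mul trmxK.
- move=> v; rewrite mulmxA -trmx_mul -mulmxA mxE.
  by apply: sumr_ge0 => k _; rewrite mxE -expr2 sqr_ge0.
- exact: leq_trans (mxrankM_maxr _ _) (rank_leq_row _).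
- by move=> i; rewrite blk_gram; case: (YA i).
- move=> i j _; rewrite blk_gram; case: (YA i) => Yi_orth Yi_det.
  case: (YA j) => Yj_orth Yj_det; split.
    rewrite trmx_mul trmxK mulmxA -(mulmxA _ (Y *m (blk_sel R d i)^T)).
    by rewrite (mulmx1C Yi_orth) mulmx1.
  by rewrite det_mulmx det_tr Yi_det Yj_det mulr1.
Qed.

Lemma feasB_gram (G : 'M[R]_(m * d)) :
  feasB G -> exists2 Y : 'M[R]_(d, m * d), feasA Y & G = Y^T *m Y.
Proof.
case: m G => [|m'] G; first by exists 0; [case | apply/matrixP => -[]].
case=> G_sym _ rkG Gdiag Gstep.
set P := blk_sel R d (@ord0 m'); set Y := P *m G.
have YP : Y *m P^T = 1%:M by exact: Gdiag ord0.
have GE : G = Y^T *m Y by apply: sym_rank_le_gram.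
exists Y => // i; split; first by rewrite -blk_gram -GE Gdiag.
apply: (det_chain_eq1 (fun i => Y *m (blk_sel R d i)^T)) => [|j k jk].
  by rewrite YP det1.
by have [] := Gstep j k jk; rewrite GE blk_gram.
Qed.

End Feasibility.

Theorem theorem2 (R : realType) (d m : nat)
  (n : 'I_m -> 'I_m -> nat) (x : 'I_m -> 'I_m -> nat -> 'cV[R]_d)
  (Ldag : 'M[R]_m) (hL : is_MP_pinv (Lmat R n) Ldag)
  (G : 'M[R]_(m * d)) :
  is_minimizer (@feasB R m d) (objB (Cmat n x Ldag)) G <->
  exists Rm : 'M[R]_(d, m * d),
    is_minimizer (@feasA R m d) (objA (Cmat n x Ldag)) Rm /\ G = Rm^T *m Rm.
Proof.
exact: (is_minimizer_image (fun Y => Y^T *m Y) (@feasA_gram R m d)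
                           (@feasB_gram R m d)).
Qed.
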